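(* Let $(b_n)_{n\ge1}$ be a sequence of positive real numbers. Then $(\theta(M_n)-\theta(m(n)))/b_n\to0$ in probability as $n\to\infty$ if and only if, for every $\varepsilon>0$, $$n\,y_{\Theta(\varepsilon b_n+\theta(m(n)))}\to0\quad\text{and}\quad n\,y_{\Theta(-\varepsilon b_n+\theta(m(n)))}\to\infty\quad(n\to\infty).$$
   Context: Let $\{X_n,n\ge1\}$ be independent, identically distributed random variables with values in $\mathbb{Z}_+=\{0,1,2,\dots\}$ such that $p_k=P[X_1=k]>0$ for every $k\in\mathbb{Z}_+$ (set $p_m=0$ for integers $m\le -1$). For $k\in\mathbb{Z}_+$ let $y_k=\sum_{i>k}p_i$, and set $y_m=1$ for integers $m\le-1$. Let $m(t)=\min\{j\in\mathbb{Z}_+: y_j<1/t\}$ for $t>0$. For the fixed integer $\delta$ define $s_k=p_{k+\delta}/y_{k-1}$ and $\theta(k)=\sum_{i=0}^k s_i$ for $k\in\mathbb{Z}_+$, and $\theta(\infty)=\sum_{i\ge0}s_i\le\infty$. For $t\in[s_0,\theta(\infty))$ let $\Theta(t)=\max\{k\in\mathbb{Z}_+:\theta(k)\le t\}$, so that $y_{\Theta(t)}=P[\theta(X_1)>t]$; for real $t$ outside this range, $y_{\Theta(t)}$ is to be read as $P[\theta(X_1)>t]$. Let $M_n=\max\{X_1,\dots,X_n\}$ for $n\ge1$. *)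

From HB Require Import structures.
From mathcomp Require Import all_boot all_order all_algebra.
From mathcomp Require Import all_classical all_reals all_analysis.
Set Implicit Arguments. Unset Strict Implicit. Unset Printing Implicit Defensive.
Import Order.TTheory GRing.Theory Num.Theory.
Import numFieldNormedType.Exports.
Local Open Scope classical_set_scope.
Local Open Scope ring_scope.

Section Defs.
Context {R : realType} {d : measure_display} {T : measurableType d}.
Variable (P : probability T R).

(* Each X i is a Z_+-valued random variable: all preimages are events
   (Z_+ carries the discrete sigma-algebra). *)
Definition nat_rv (Y : T -> nat) : Prop :=
  forall A : set nat, measurable (Y @^-1` A).

Definition mutually_independent (X : nat -> T -> nat) : Prop :=
  forall (s : seq nat) (A : nat -> set nat), uniq s ->
    P (\bigcap_(i in [set i | i \in s]) (X i @^-1` A i)) =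
    (\prod_(i <- s) P (X i @^-1` A i))%E.

Definition identically_distributed (X : nat -> T -> nat) : Prop :=
  forall (i : nat) (A : set nat), P (X i @^-1` A) = P (X 0%N @^-1` A).

Variable X : nat -> T -> nat.   (* X i is X_{i+1} in the paper *)

Definition pk (k : nat) : R := fine (P (X 0%N @^-1` [set k])).
Definition p_int (m : int) : R :=
  match m with Posz k => pk k | Negz _ => 0 end.

Definition y_int (m : int) : R :=
  match m with
  | Posz k => fine (P (X 0%N @^-1` [set j | (k < j)%N]))
  | Negz _ => 1
  end.

(* m(t) = min { j in Z_+ : y_j < 1/t } (0 if the set were empty,
   which cannot happen under the hypotheses). *)
Definition m_of (t : R) : nat :=
  match pselect (exists j : nat, y_int (Posz j) < t^-1) with
  | left h => ex_minn h
  | right _ => 0%N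
  end.

Variable delta : int.

Definition s_k (k : nat) : R := p_int (Posz k + delta) / y_int (Posz k - 1).

Definition theta (k : nat) : R := \sum_(0 <= i < k.+1) s_k i.

(* y_{Theta(t)}, read (as in the paper) as P[theta(X_1) > t]. *)
Definition yTheta (t : R) : R := fine (P [set w | t < theta (X 0%N w)]).

Definition M (n : nat) (w : T) : nat := \max_(i < n) X i w.

End Defs.

(* Since theta is nondecreasing, theta(M_n) <= t exactly when theta(X_i) <= t
   for every i <= n, so P[theta(M_n) <= t] = (1 - y_Theta(t))^n.  The event
   |theta(M_n) - c_n| > e b_n contains {theta(M_n) > c_n + e b_n}, is contained in
   its union with {theta(M_n) <= c_n - e b_n}, and the latter lies in the same
   event for e/2.  Convergence in probability therefore means 1 - (1 - q_n)^n -> 0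
   and (1 - q'_n)^n -> 0 for the two tails q_n, q'_n, which is equivalent to
   n q_n -> 0 and n q'_n -> oo by 1 - n q <= (1 - q)^n <= 1 / (1 + n q) and
   exp(-2 n q) <= (1 - q)^n for q <= 1/2. *)

From Pilot Require Import Defs.
From HB Require Import structures.
From mathcomp Require Import all_boot all_order all_algebra.
From mathcomp Require Import all_classical all_reals all_analysis.
From mathcomp Require Import ring lra.
Import Order.TTheory GRing.Theory Num.Theory.
Import numFieldNormedType.Exports.
Local Open Scope classical_set_scope.
Local Open Scope ring_scope.

Section PowerOfComplement.
Context {R : realType}.
Implicit Types (q : R) (n : nat).

Lemma bernoulli_inequality q n : 0 <= q <= 1 -> 1 - n%:R * q <= (1 - q) ^+ n.
Proof.
move=> /andP[q0 q1]; elim: n => [|n IH]; first by rewrite mul0r subr0 expr0.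
rewrite exprSr -natr1.
have nq0 : 0 <= n%:R * q by apply: mulr_ge0.
have : (1 - n%:R * q) * (1 - q) <= (1 - q) ^+ n * (1 - q) by apply: ler_wpM2r; lra.
nra.
Qed.

Lemma expr1B_mul1Dn_le1 q n : 0 <= q <= 1 -> (1 - q) ^+ n * (1 + n%:R * q) <= 1.
Proof.
move=> /andP[q0 q1]; elim: n => [|n IH]; first by rewrite mul0r addr0 expr0 mul1r.
rewrite exprSr -natr1.
have nq0 : 0 <= n%:R * q by apply: mulr_ge0.
have : 0 <= (1 - q) ^+ n * (n%:R * q * q + q * q).
  by apply: mulr_ge0; [apply: exprn_ge0; lra | nra].
nra.
Qed.

Lemma expR_le_expr1B q n : 0 <= q <= 2^-1 ->
  expR (- (2 * (n%:R * q))) <= (1 - q) ^+ n.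
Proof.
move=> /andP[q0 q1].
have expR2q : expR (- (2 * q)) <= 1 - q.
  have q1' : 0 < 1 - q by lra.
  rewrite expRN -[leRHS]invrK lef_pV2 ?posrE ?expR_gt0 ?invr_gt0 //.
  by apply: le_trans (expR_ge1Dx _); rewrite -div1r ler_pdivrMr //; nra.
have -> : - (2 * (n%:R * q)) = n%:R * (- (2 * q)) by ring.
by rewrite expRM_natl lerXn2r ?nnegrE ?(ltW (expR_gt0 _)) //; lra.
Qed.

Variable q : nat -> R.
Hypothesis q01 : forall n, 0 <= q n <= 1.

Lemma cvg_1B_expr1B_0P :
  (fun n => 1 - (1 - q n) ^+ n) @ \oo --> 0 <->
  (fun n => n%:R * q n) @ \oo --> 0.
Proof.
split => [cvg_a | cvg_nq].
- have squeeze : \forall n \near \oo,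
      0 <= n%:R * q n <= (1 - (1 - q n) ^+ n) + (1 - (1 - q n) ^+ n).
    near=> n.
    have half : 1 - (1 - q n) ^+ n < 2^-1.
      by near: n; apply: (cvgr_lt 0) => //; rewrite invr_gt0.
    have := expr1B_mul1Dn_le1 _ n (q01 n); have /andP[q0 _] := q01 n.
    have nq0 : 0 <= n%:R * q n by apply: mulr_ge0.
    by move=> ?; apply/andP; split => //; nra.
  apply: (squeeze_cvgr squeeze); first exact: cvg_cst.
  by rewrite -(addr0 0); exact: cvgD.
- have squeeze : \forall n \near \oo, 0 <= 1 - (1 - q n) ^+ n <= n%:R * q n.
    near=> n; have /andP[q0 q1] := q01 n.
    apply/andP; split; first by rewrite subr_ge0 exprn_ile1 //; lra.
    by have := bernoulli_inequality _ n (q01 n); lra.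
  by apply: (squeeze_cvgr squeeze) => //; exact: cvg_cst.
Unshelve. all: end_near.
Qed.

Lemma cvg_expr1B_0P :
  (fun n => (1 - q n) ^+ n) @ \oo --> 0 <->
  (fun n => n%:R * q n) @ \oo --> +oo.
Proof.
split => [cvg_a | cvg_nq].
- apply/cvgryPgt => A; pose K := `|A| + 1.
  have K0 : 0 < K by rewrite /K; apply: ltr_pwDr => //.
  have AK : A < K by rewrite /K; have := ler_norm A; lra.
  near=> n.
  have nK : 4 * K <= n%:R by near: n; exact: nbhs_infty_ger.
  have small : (1 - q n) ^+ n < expR (- (2 * K)).
    by near: n; apply: (cvgr_lt 0) => //; exact: expR_gt0.
  rewrite ltNge; apply/negP => nqA; have /andP[q0 q1] := q01 n.
  have q_half : q n <= 2^-1 by nra.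
  have := expR_le_expr1B _ n (introT andP (conj q0 q_half)).
  suff : expR (- (2 * K)) <= expR (- (2 * (n%:R * q n))) by lra.
  by rewrite ler_expR; lra.
- apply/cvgrPdist_lt => eps eps0; near=> n.
  have big : eps^-1 < n%:R * q n by near: n; apply: (cvgry_gt cvg_nq).
  have := expr1B_mul1Dn_le1 _ n (q01 n); have /andP[q0 q1] := q01 n.
  set a := (1 - q n) ^+ n; set N := n%:R * q n => bound.
  have a0 : 0 <= a by apply: exprn_ge0; lra.
  have epsN : 1 < eps * N by rewrite -ltr_pdivrMl // mulr1.
  rewrite sub0r normrN ger0_norm //; nra.
Unshelve. all: end_near.
Qed.

End PowerOfComplement.

Lemma cvg_probability0P {R : realType} {d : measure_display} {T : measurableType d}
    (P : probability T R) (A : nat -> set T) : (forall n, measurable (A n)) ->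
  (fun n => P (A n)) @ \oo --> 0%E <-> (fun n => fine (P (A n))) @ \oo --> 0.
Proof.
move=> mA; rewrite fine_cvgP; split=> [[] //|]; split => //.
by apply: nearW => n; exact: fin_num_measure.
Qed.

Lemma lt_norm_divrP {R : realFieldType} (e b x : R) : 0 < b ->
  e < `|x / b| <-> e * b < x \/ x < - (e * b).
Proof.
move=> b0; rewrite normf_div (gtr0_norm b0) ltr_pdivlMr // ltr_normr.
by split => [/orP[] | []] h; [left | right | apply/orP; left | apply/orP; right]; lra.
Qed.

Lemma setC_ltr {R : realDomainType} {U : Type} (f : U -> R) (t : R) :
  ~` [set u | t < f u] = [set u | f u <= t].
Proof.
by apply/seteqP; split => u /=; rewrite ltNge; [move/negP/negbNE | move=> ->].
Qed.

Section MaximumOfIID.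
Context {R : realType} {d : measure_display} {T : measurableType d}.
Variables (P : probability T R) (X : nat -> T -> nat) (delta : int).
Hypothesis X_rv : forall i, nat_rv (X i).

Local Notation theta := (theta P X delta).
Local Notation yTheta := (yTheta P X delta).

Lemma s_k_ge0 k : 0 <= s_k P X delta k.
Proof.
rewrite /s_k; apply: divr_ge0.
  by case: (Posz k + delta) => [j|j] //=; apply: fine_ge0; exact: measure_ge0.
by case: (Posz k - 1) => [j|j] //=; apply: fine_ge0; exact: measure_ge0.
Qed.

Lemma theta_nondecreasing : {homo theta : a b / (a <= b)%N >-> a <= b}.
Proof.
move=> a b ab; rewrite /Defs.theta [leRHS](big_cat_nat _ (n := a.+1)) //=.
by rewrite lerDl; apply: sumr_ge0 => i _; exact: s_k_ge0.
Qed.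

Lemma theta_M_le n w t : (0 < n)%N ->
  theta (M X n w) <= t <-> forall i, (i < n)%N -> theta (X i w) <= t.
Proof.
move=> n0; have [i0 Mi0] : {i0 : 'I_n | M X n w = X i0 w}.
  by apply: bigop.eq_bigmax; rewrite card_ord.
split => [Mt i ltin | Xt]; last by rewrite Mi0; exact: Xt.
apply: le_trans Mt; apply: theta_nondecreasing.
exact: (leq_bigmax (Ordinal ltin)).
Qed.

Lemma nat_rv_M n : nat_rv (M X n).
Proof.
elim: n => [|n IH] A.
  have -> : M X 0 @^-1` A = X 0%N @^-1` [set _ | A 0%N].
    by apply/seteqP; split => w /=; rewrite /M big_ord0.
  exact: X_rv.
have -> : M X n.+1 @^-1` A =
    \bigcup_k (M X n @^-1` [set k] `&` X n @^-1` [set j | A (maxn k j)]).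
  apply/seteqP; split => w /=; rewrite /M big_ord_recr /=.
    by move=> Aw; exists (M X n w).
  by move=> [k _ [/= <-]].
by apply: bigcupT_measurable => k; apply: measurableI; [exact: IH | exact: X_rv].
Qed.

Lemma yTheta_in01 t : 0 <= yTheta t <= 1.
Proof.
have mX : measurable [set w | t < theta (X 0%N w)].
  exact: (X_rv 0 [set k | t < theta k]).
rewrite /Defs.yTheta fine_ge0 ?measure_ge0 //=.
by rewrite -lee_fin fineK ?fin_num_measure ?probability_le1.
Qed.

Hypotheses (X_indep : mutually_independent P X) (X_id : identically_distributed P X).

Lemma probability_theta_M_le n t : (0 < n)%N ->
  P [set w | theta (M X n w) <= t] = ((1 - yTheta t) ^+ n)%:E.
Proof.
move=> n0.
have -> : [set w | theta (M X n w) <= t] =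
    \bigcap_(i in [set i | i \in iota 0 n]) (X i @^-1` [set k | theta k <= t]).
  apply/seteqP; split => w /=; rewrite theta_M_le //.
    by move=> Xt i /=; rewrite mem_iota add0n => /andP[_]; exact: Xt.
  by move=> Xt i ltin; apply: Xt; rewrite /= mem_iota add0n ltin.
rewrite X_indep ?iota_uniq //.
have one_factor i : P (X i @^-1` [set k | theta k <= t]) = (1 - yTheta t)%:E.
  have mX : measurable [set w | t < theta (X 0%N w)].
    exact: (X_rv 0 [set k | t < theta k]).
  rewrite X_id.
  have -> : X 0%N @^-1` [set k | theta k <= t] = ~` [set w | t < theta (X 0%N w)].
    by rewrite setC_ltr.
  rewrite probability_setC // /Defs.yTheta EFinB fineK //.
  exact: fin_num_measure.
under eq_bigr do rewrite one_factor.
have -> : iota 0 n = index_iota 0 n by rewrite /index_iota subn0.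
by rewrite prodEFin prodr_const_nat subn0.
Qed.

Lemma probability_theta_M_gt n t : (0 < n)%N ->
  P [set w | t < theta (M X n w)] = (1 - (1 - yTheta t) ^+ n)%:E.
Proof.
move=> n0; rewrite -[[set w | _]]setCK.
rewrite (setC_ltr (fun w => theta (M X n w)) t).
rewrite probability_setC ?probability_theta_M_le //.
exact: (nat_rv_M n [set k | theta k <= t]).
Qed.

Definition deviation n (c b e : R) : set T :=
  [set w | e < `|(theta (M X n w) - c) / b|].

Let measurable_deviation n c b e : measurable (deviation n c b e).
Proof. exact: (nat_rv_M n [set k | e < `|(theta k - c) / b|]). Qed.

Let measurable_theta_M_gt n t : measurable [set w | t < theta (M X n w)].
Proof. exact: (nat_rv_M n [set k | t < theta k]). Qed.

Let measurable_theta_M_le n t : measurable [set w | theta (M X n w) <= t].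
Proof. exact: (nat_rv_M n [set k | theta k <= t]). Qed.

Section DeviationBounds.
Variables (n : nat) (c b e : R).
Hypotheses (n0 : (0 < n)%N) (b0 : 0 < b).

Lemma deviation_ge_upper :
  1 - (1 - yTheta (e * b + c)) ^+ n <= fine (P (deviation n c b e)).
Proof.
rewrite -lee_fin fineK ?fin_num_measure // -probability_theta_M_gt //.
apply: le_measure; rewrite ?inE // => w /= Mw.
by apply/lt_norm_divrP => //; left; lra.
Qed.

Lemma deviation_half_ge_lower : 0 < e ->
  (1 - yTheta (- (e * b) + c)) ^+ n <= fine (P (deviation n c b (e / 2))).
Proof.
move=> e0; rewrite -lee_fin fineK ?fin_num_measure // -probability_theta_M_le //.
apply: le_measure; rewrite ?inE // => w /= Mw.
have eb0 : 0 < e * b by exact: mulr_gt0.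
by apply/lt_norm_divrP => //; right; rewrite mulrAC; lra.
Qed.

Lemma deviation_le :
  fine (P (deviation n c b e)) <=
  (1 - (1 - yTheta (e * b + c)) ^+ n) + (1 - yTheta (- (e * b) + c)) ^+ n.
Proof.
rewrite -lee_fin fineK ?fin_num_measure // EFinD.
rewrite -probability_theta_M_gt // -probability_theta_M_le //.
apply: le_trans (measureU2 _ _ _) => //; apply: le_measure; rewrite ?inE //.
  exact: measurableU.
by move=> w /lt_norm_divrP-/(_ b0) [] Mw; [left | right] => /=; lra.
Qed.

End DeviationBounds.

Lemma cvg_deviation0_boundsP (c b : nat -> R) : (forall n, (0 < n)%N -> 0 < b n) ->
  (forall e, 0 < e -> (fun n => P (deviation n (c n) (b n) e)) @ \oo --> 0%E) <->
  (forall e, 0 < e ->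
     (fun n => 1 - (1 - yTheta (e * b n + c n)) ^+ n) @ \oo --> 0 /\
     (fun n => (1 - yTheta (- (e * b n) + c n)) ^+ n) @ \oo --> 0).
Proof.
move=> b0.
pose upper e n := 1 - (1 - yTheta (e * b n + c n)) ^+ n.
pose lower e n := (1 - yTheta (- (e * b n) + c n)) ^+ n.
pose dev e n := fine (P (deviation n (c n) (b n) e)).
have upper_ge0 e n : 0 <= upper e n.
  have /andP[q0 q1] := yTheta_in01 (e * b n + c n).
  by rewrite subr_ge0 exprn_ile1 //; lra.
have lower_ge0 e n : 0 <= lower e n.
  by have /andP[_ q1] := yTheta_in01 (- (e * b n) + c n); apply: exprn_ge0; lra.
have dev_ge0 e n : 0 <= dev e n by apply: fine_ge0; exact: measure_ge0.
have dev0P e :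
    (fun n => P (deviation n (c n) (b n) e)) @ \oo --> 0%E <-> dev e @ \oo --> 0.
  exact: cvg_probability0P.
have n_pos : \forall n \near \oo, (0 < n)%N by exact: nbhs_infty_ge 1%N.
split => [cvg_dev e e0 | cvg_bounds e e0].
  have dev0 e' : 0 < e' -> dev e' @ \oo --> 0 by move=> e'0; apply/dev0P/cvg_dev.
  have e20 : 0 < e / 2 by rewrite divr_gt0.
  split.
    apply: (squeeze_cvgr _ (cvg_cst 0) (dev0 e e0)).
    near=> n; rewrite upper_ge0 /=.
    by apply: deviation_ge_upper; [near: n | apply: b0; near: n].
  apply: (squeeze_cvgr _ (cvg_cst 0) (dev0 _ e20)).
  near=> n; rewrite lower_ge0 /=.
  by apply: deviation_half_ge_lower; [near: n | apply: b0; near: n |].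
have [upper0 lower0] := cvg_bounds e e0.
have sum0 : (fun n => upper e n + lower e n) @ \oo --> 0.
  by rewrite -(addr0 0); exact: cvgD.
apply/dev0P; apply: (squeeze_cvgr _ (cvg_cst 0) sum0).
near=> n; rewrite dev_ge0 /=.
by apply: deviation_le; [near: n | apply: b0; near: n].
Unshelve. all: end_near.
Qed.

Lemma cvg_deviation0P (c b : nat -> R) : (forall n, (0 < n)%N -> 0 < b n) ->
  (forall e, 0 < e -> (fun n => P (deviation n (c n) (b n) e)) @ \oo --> 0%E) <->
  (forall e, 0 < e -> (fun n => n%:R * yTheta (e * b n + c n)) @ \oo --> 0 /\
                      (fun n => n%:R * yTheta (- (e * b n) + c n)) @ \oo --> +oo).
Proof.
move=> b0; apply: iff_trans (cvg_deviation0_boundsP c b b0) _.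
have in01_upper e n : 0 <= yTheta (e * b n + c n) <= 1 by exact: yTheta_in01.
have in01_lower e n : 0 <= yTheta (- (e * b n) + c n) <= 1 by exact: yTheta_in01.
split => cvg_e e e0; have [cvg_upper cvg_lower] := cvg_e e e0; split.
- by apply/(cvg_1B_expr1B_0P _ (in01_upper e)).
- by apply/(cvg_expr1B_0P _ (in01_lower e)).
- by apply/(cvg_1B_expr1B_0P _ (in01_upper e)).
- by apply/(cvg_expr1B_0P _ (in01_lower e)).
Qed.

End MaximumOfIID.

Theorem corollaryA1 (R : realType) (d : measure_display) (T : measurableType d)
  (P : probability T R) (X : nat -> T -> nat) (delta : int) (b : nat -> R) :
  (forall i, nat_rv (X i)) ->
  mutually_independent P X ->
  identically_distributed P X ->
  (forall k : nat, 0 < pk P X k) ->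
  (forall n : nat, (0 < n)%N -> 0 < b n) ->
  ((forall e : R, 0 < e ->
      (fun n : nat =>
         P [set w | e < `| (theta P X delta (M X n w)
                            - theta P X delta (m_of P X n%:R)) / b n | ])
      @ \oo --> 0%E)
   <->
   (forall e : R, 0 < e ->
      (fun n : nat =>
         n%:R * yTheta P X delta (e * b n + theta P X delta (m_of P X n%:R)))
        @ \oo --> 0
      /\
      (fun n : nat =>
         n%:R * yTheta P X delta (- (e * b n) + theta P X delta (m_of P X n%:R)))
        @ \oo --> +oo)).
Proof.
move=> X_rv X_indep X_id _ b0.
exact: (cvg_deviation0P _ _ _ X_rv X_indep X_id
  (fun n => theta P X delta (m_of P X n%:R)) _ b0).
Qed.
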